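(* Let $X$ be a compact metric space, $r\in\omega$, and $\mathcal C_i\subseteq\mathcal P(X)$ for $i<r$. Let $P^\nu_i$ be the optimal derivation sequence for $\mathcal C_i$, and let $Q^\nu$ be the optimal derivation sequence for $\{\bigcap_{i<r}C_i: C_i\in\mathcal C_i \text{ for each } i<r\}$. Then for all ordinals $(\nu_i)_{i<r}$, $Q^{\#_{i<r}\nu_i}\subseteq\bigcup_{i<r}P_i^{\nu_i}$.
   Context: Optimal derivation sequence: for $\mathcal C\subseteq\mathcal P(X)$, define $P^0=X$, $P^{\nu+1}=P^\nu\setminus\bigcup\{U\subseteq X \text{ open}: P^\nu\cap U\subseteq C\text{ for some }C\in\mathcal C\}$, and $P^\lambda=\bigcap_{\nu<\lambda}P^\nu$ for limit $\lambda$. Natural (Hessenberg) sum: if $\alpha$ and $\beta$ have Cantor normal forms with exponents among $\xi_1>\dots>\xi_r$, $\alpha=\sum_i\omega^{\xi_i}m_i$, $\beta=\sum_i\omega^{\xi_i}n_i$ ($m_i,n_i\in\mathbb N$), then $\alpha\#\beta=\sum_i\omega^{\xi_i}(m_i+n_i)$; $\#_{i<r}\nu_i$ is the iterated natural sum (with value $0$ if $r=0$). *)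

From Stdlib Require Import Reals List Arith.
Open Scope R_scope.

Definition IsMetric {X : Type} (d : X -> X -> R) : Prop :=
  (forall x y, 0 <= d x y) /\
  (forall x y, d x y = 0 <-> x = y) /\
  (forall x y, d x y = d y x) /\
  (forall x y z, d x z <= d x y + d y z).

Definition IsOpen {X : Type} (d : X -> X -> R) (U : X -> Prop) : Prop :=
  forall x, U x -> exists eps, 0 < eps /\ forall y, d x y < eps -> U y.

Definition IsCompact {X : Type} (d : X -> X -> R) : Prop :=
  forall (I : Type) (U : I -> X -> Prop),
    (forall i, IsOpen d (U i)) -> (forall x, exists i, U i x) ->
    exists l : list I, forall x, exists i, In i l /\ U i x.

Record RawOrd := { rcar : Type; rlt : rcar -> rcar -> Prop }.

Definition IsWO (A : RawOrd) : Prop :=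
  well_founded (rlt A) /\
  (forall a b c, rlt A a b -> rlt A b c -> rlt A a c) /\
  (forall a b, rlt A a b \/ a = b \/ rlt A b a).

Definition OrdIso (A B : RawOrd) : Prop :=
  exists f : rcar A -> rcar B,
    (forall a a', f a = f a' -> a = a') /\
    (forall b, exists a, f a = b) /\
    (forall a a', rlt A a a' <-> rlt B (f a) (f a')).

Definition OrdLt (A B : RawOrd) : Prop :=
  exists (b : rcar B) (f : rcar A -> rcar B),
    (forall a a', f a = f a' -> a = a') /\
    (forall a, rlt B (f a) b) /\
    (forall b', rlt B b' b -> exists a, f a = b') /\
    (forall a a', rlt A a a' <-> rlt B (f a) (f a')).

(* omega ^ xi : finitely supported functions xi -> nat, compared at the
   largest point where they differ *)
Definition omega_pow (xi : RawOrd) : RawOrd :=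
  {| rcar := { f : rcar xi -> nat | exists l : list (rcar xi), forall x, f x <> 0%nat -> In x l };
     rlt := fun f g => exists x, (proj1_sig f x < proj1_sig g x)%nat /\
                         forall y, rlt xi x y -> proj1_sig f y = proj1_sig g y |}.

(* A * m (ordinal product with a natural number m): m copies of A *)
Definition ord_mul_nat (A : RawOrd) (m : nat) : RawOrd :=
  {| rcar := ({ k : nat | (k < m)%nat } * rcar A)%type;
     rlt := fun p q => (proj1_sig (fst p) < proj1_sig (fst q))%nat \/
                       (proj1_sig (fst p) = proj1_sig (fst q) /\ rlt A (snd p) (snd q)) |}.

Definition ord_sum (s : nat) (A : nat -> RawOrd) : RawOrd :=
  {| rcar := { z : { j : nat & rcar (A j) } | (projT1 z < s)%nat };
     rlt := fun z1 z2 =>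
       (projT1 (proj1_sig z1) < projT1 (proj1_sig z2))%nat \/
       exists e : projT1 (proj1_sig z1) = projT1 (proj1_sig z2),
         rlt (A (projT1 (proj1_sig z2)))
             (eq_rect _ (fun j => rcar (A j)) (projT2 (proj1_sig z1)) _ e)
             (projT2 (proj1_sig z2)) |}.

Definition cnf (s : nat) (xi : nat -> RawOrd) (m : nat -> nat) : RawOrd :=
  ord_sum s (fun j => ord_mul_nat (omega_pow (xi j)) (m j)).

Definition sum_below (r : nat) (g : nat -> nat) : nat :=
  fold_right Nat.add 0%nat (map g (seq 0 r)).

(* NatSum r nu gamma : gamma has the order type of the iterated natural
   (Hessenberg) sum #_{i<r} nu i, computed from Cantor normal forms with a
   common strictly decreasing list of exponents xi 0 > ... > xi (s-1). *)
Definition NatSum (r : nat) (nu : nat -> RawOrd) (gamma : RawOrd) : Prop :=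
  exists (s : nat) (xi : nat -> RawOrd) (m : nat -> nat -> nat),
    (forall j, (j < s)%nat -> IsWO (xi j)) /\
    (forall j, (S j < s)%nat -> OrdLt (xi (S j)) (xi j)) /\
    (forall i, (i < r)%nat -> OrdIso (nu i) (cnf s xi (m i))) /\
    OrdIso gamma (cnf s xi (fun j => sum_below r (fun i => m i j))).

Definition deriv_step {X : Type} (d : X -> X -> R) (C : (X -> Prop) -> Prop)
    (A : X -> Prop) : X -> Prop :=
  fun x => A x /\
    ~ (exists U, IsOpen d U /\ U x /\
         exists c, C c /\ forall y, A y -> U y -> c y).

Definition IsMaxIn {T : Type} (lt : T -> T -> Prop) (below : T -> Prop) (p : T) : Prop :=
  below p /\ forall v, below v -> v = p \/ lt v p.

(* value of the sequence at the ordinal whose predecessors are [below]: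
   X at 0, the derivative of the previous stage at successors,
   the intersection at limits *)
Definition deriv_clause {X : Type} (d : X -> X -> R) (C : (X -> Prop) -> Prop)
    (W : RawOrd) (S : rcar W -> X -> Prop) (below : rcar W -> Prop) : X -> Prop :=
  fun x =>
    (forall p, IsMaxIn (rlt W) below p -> deriv_step d C (S p) x) /\
    ((~ exists p, IsMaxIn (rlt W) below p) -> forall v, below v -> S v x).

(* S v = P^(ordinal of {u | u < v}) for all v in W *)
Definition IsDerivSeq {X : Type} (d : X -> X -> R) (C : (X -> Prop) -> Prop)
    (W : RawOrd) (S : rcar W -> X -> Prop) : Prop :=
  forall u x, S u x <-> deriv_clause d C W S (fun v => rlt W v u) x.

(* P^nu where nu is the order type of the well-order W *)
Definition Deriv {X : Type} (d : X -> X -> R) (C : (X -> Prop) -> Prop)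
    (W : RawOrd) : X -> Prop :=
  fun x => forall S, IsDerivSeq d C W S -> deriv_clause d C W S (fun _ => True) x.

Definition meet_family {X : Type} (r : nat) (C : nat -> (X -> Prop) -> Prop)
    : (X -> Prop) -> Prop :=
  fun D => exists c : nat -> X -> Prop,
    (forall i, (i < r)%nat -> C i (c i)) /\
    (forall x, D x <-> forall i, (i < r)%nat -> c i x).

(* We show
   Q^gamma is contained in the union of the P_i^(nu_i).

   The ordinals involved are coded as finitely supported functions E -> nat on a
   well-order E receiving all exponents ("exponent frame"), compared
   lexicographically from the top; an element of an ordinal written in Cantor normal
   form becomes the vector of its coefficients, and the natural sum becomes pointwise
   addition.  For a point y outside every P_i^(nu_i) let rank_i(y) be the first stage
   of the i-th sequence missing y.  By well-founded induction on w we prove: if the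
   code of w is the sum of the codes of the rank_i(y), then y is outside Q^w.  Near
   y, a point z either keeps all its ranks (and then lies in the intersection of the
   witnessing sets C_i) or strictly lowers one of them, and then by induction it was
   already removed at a stage beta < w, where beta bounds the codes of the sums with
   one rank lowered.  Hence y is removed at stage beta + 1 <= w. *)
From Stdlib Require Import Reals List Arith Lia Lra.
From Stdlib Require Import ClassicalEpsilon ProofIrrelevance Eqdep_dec Classical
  FunctionalExtensionality.
Local Open Scope nat_scope.

Lemma wf_irrefl (A : RawOrd) : well_founded (rlt A) -> forall a, ~ rlt A a a.
Proof. intros W a. induction (W a) as [a _ IH]. intros H. exact (IH a H H). Qed.

(* [succ_ord A] is A + 1: the new element [None] lies above all of A.  A derivation
   sequence indexed by A + 1 computes P^A at its last stage. *)
Definition succ_lt (A : RawOrd) (u v : option (rcar A)) : Prop :=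
  match u, v with
  | Some a, Some b => rlt A a b
  | Some _, None => True
  | None, _ => False
  end.

Definition succ_ord (A : RawOrd) : RawOrd := {| rcar := option (rcar A); rlt := succ_lt A |}.

Lemma succ_ord_WO A : IsWO A -> IsWO (succ_ord A).
Proof.
  intros [W [T To]]. split; [|split].
  - assert (HS : forall a, Acc (succ_lt A) (Some a)).
    { intros a. induction (W a) as [a _ IH]. constructor.
      intros [b|] H; simpl in H; [apply IH; exact H | contradiction]. }
    intros [a|]; [apply HS|]. constructor. intros [b|] H; [apply HS | contradiction].
  - intros [a|] [b|] [c|]; simpl; try tauto. apply T.
  - intros [a|] [b|]; simpl; auto. destruct (To a b) as [H|[H|H]]; auto. subst; auto.
Qed.

Lemma embed_WO (A B : RawOrd) (f : rcar A -> rcar B) :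
  (forall a a', f a = f a' -> a = a') -> (forall a a', rlt A a a' <-> rlt B (f a) (f a')) ->
  IsWO B -> IsWO A.
Proof.
  intros Hi Hf [W [T To]]. split; [|split].
  - intros a. remember (f a) as b eqn:E. revert a E. induction (W b) as [b _ IH].
    intros a E. constructor. intros a' H. apply (IH (f a')); auto. subst. apply Hf; auto.
  - intros a b c H1 H2. apply Hf. apply Hf in H1. apply Hf in H2. eauto.
  - intros a b. destruct (To (f a) (f b)) as [H|[H|H]];
      [left; apply Hf; auto | right; left; auto | right; right; apply Hf; auto].
Qed.

Lemma iso_WO A B : OrdIso A B -> IsWO A -> IsWO B.
Proof.
  intros [f [Hi [Hs Hf]]] [W [T To]]. split; [|split].
  - assert (H : forall a, Acc (rlt B) (f a)).
    { intros a. induction (W a) as [a _ IH]. constructor. intros b H.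
      destruct (Hs b) as [a' <-]. apply IH. apply Hf; auto. }
    intros b. destruct (Hs b) as [a <-]; auto.
  - intros b1 b2 b3. destruct (Hs b1) as [a1 <-], (Hs b2) as [a2 <-], (Hs b3) as [a3 <-].
    intros H H0. apply Hf. apply Hf in H. apply Hf in H0. eauto.
  - intros b1 b2. destruct (Hs b1) as [a1 <-], (Hs b2) as [a2 <-].
    destruct (To a1 a2) as [H|[H|H]];
      [left; apply Hf; auto | right; left; subst; auto | right; right; apply Hf; auto].
Qed.

Lemma mul_WO A m : IsWO A -> IsWO (ord_mul_nat A m).
Proof.
  intros [W [T To]]. split; [|split].
  - intros [[k Hk] a]. revert Hk a.
    induction k as [k IHk] using (well_founded_induction lt_wf).
    intros Hk a. induction (W a) as [a _ IHa]. constructor.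
    intros [[k' Hk'] a'] H. simpl in H. destruct H as [H|[H1 H2]].
    + apply IHk; auto.
    + subst k'. rewrite (proof_irrelevance _ Hk' Hk). apply IHa. exact H2.
  - intros [[k1 ?] a1] [[k2 ?] a2] [[k3 ?] a3]; simpl.
    intros [H|[H H']] [G|[G G']];
      [left; lia | left; lia | left; lia | right; split; [lia | eauto]].
  - intros [[k1 H1] a1] [[k2 H2] a2]; simpl.
    destruct (lt_eq_lt_dec k1 k2) as [[H|H]|H]; [left; left; auto | | right; right; left; auto].
    subst k2. destruct (To a1 a2) as [G|[G|G]];
      [left; right; auto
      | right; left; subst; f_equal; f_equal; apply proof_irrelevance
      | right; right; right; auto].
Qed.

Lemma mul0_WO A : IsWO (ord_mul_nat A 0).
Proof. split; [|split]; intros [[k Hk] a]; lia. Qed.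

Lemma sum_WO s A : (forall j, j < s -> IsWO (A j)) -> IsWO (ord_sum s A).
Proof.
  intros HA. split; [|split].
  - intros [[j a] Hj]. revert a Hj.
    induction j as [j IHj] using (well_founded_induction lt_wf).
    intros a Hj. destruct (HA j Hj) as [W _]. induction (W a) as [a _ IHa]. constructor.
    intros [[j' a'] Hj'] H. simpl in H. destruct H as [H|[e H]].
    + apply IHj; auto.
    + simpl in *. destruct e. simpl in H. rewrite (proof_irrelevance _ Hj' Hj).
      apply IHa. exact H.
  - intros [[j1 a1] H1] [[j2 a2] H2] [[j3 a3] H3]; simpl.
    intros [G|[e G]] [K|[f K]]; simpl in *.
    + left; lia.
    + left. destruct f. exact G.
    + left. destruct e. exact K.
    + destruct e, f. simpl in *. right. exists eq_refl. simpl.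
      destruct (HA j1 H1) as [_ [T _]]. eauto.
  - intros [[j1 a1] H1] [[j2 a2] H2]; simpl.
    destruct (lt_eq_lt_dec j1 j2) as [[H|H]|H]; [left; left; auto | | right; right; left; auto].
    subst j2. destruct (HA j1 H1) as [_ [_ To]]. destruct (To a1 a2) as [G|[G|G]].
    + left. right. exists eq_refl. exact G.
    + right; left. subst. f_equal. apply proof_irrelevance.
    + right; right; right. exists eq_refl. exact G.
Qed.

Lemma least_element (A : RawOrd) (P : rcar A -> Prop) : well_founded (rlt A) ->
  forall u, P u -> exists m, P m /\ forall w, rlt A w m -> ~ P w.
Proof.
  intros Wf u. induction u as [u IH] using (well_founded_induction Wf). intros Pu.
  destruct (classic (exists w, rlt A w u /\ P w)) as [[w [Hw Pw]]|Hn].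
  - apply (IH w); auto.
  - exists u; split; auto. intros w Hw Pw; apply Hn; eauto.
Qed.

Lemma finite_max (W : RawOrd) (f : nat -> rcar W) n : IsWO W -> 0 < n ->
  exists j, j < n /\ forall j', j' < n -> f j' = f j \/ rlt W (f j') (f j).
Proof.
  intros [_ [T To]]. induction n; intros Hn; [lia|]. destruct n.
  - exists 0. split; auto. intros j' Hj'; left; f_equal; lia.
  - destruct IHn as [j [Hj Hm]]; [lia|]. destruct (To (f j) (f (S n))) as [E|[E|E]].
    + exists (S n). split; [lia|]. intros j' Hj'.
      destruct (Nat.eq_dec j' (S n)); [left; subst; auto|].
      right. destruct (Hm j') as [E'|E']; [lia | rewrite E'; auto | eauto].
    + exists j; split; [lia|]. intros j' Hj'.
      destruct (Nat.eq_dec j' (S n)); [subst; left; auto|]. apply Hm; lia.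
    + exists j; split; [lia|]. intros j' Hj'.
      destruct (Nat.eq_dec j' (S n)); [subst; right; auto|]. apply Hm; lia.
Qed.

Lemma finite_choice {T} (n : nat) (P : nat -> T -> Prop) (t0 : T) :
  (forall i, i < n -> exists t, P i t) -> exists f : nat -> T, forall i, i < n -> P i (f i).
Proof.
  induction n; intros H.
  - exists (fun _ => t0). intros; lia.
  - destruct IHn as [f Hf]; [intros; apply H; lia|]. destruct (H n) as [t Ht]; [lia|].
    exists (fun i => if Nat.eq_dec i n then t else f i). intros i Hi.
    destruct (Nat.eq_dec i n); [subst; auto | apply Hf; lia].
Qed.

Lemma sum_below_S n g : sum_below (S n) g = sum_below n g + g n.
Proof.
  unfold sum_below. rewrite seq_S, map_app, fold_right_app. simpl.
  generalize (map g (seq 0 n)). intros l. induction l; simpl; lia.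
Qed.

Lemma sum_below_ext n g h : (forall i, i < n -> g i = h i) -> sum_below n g = sum_below n h.
Proof. induction n; intros H; [reflexivity|]. rewrite !sum_below_S, IHn, H; auto. Qed.

Lemma sum_below_pos n g : 0 < sum_below n g -> exists i, i < n /\ 0 < g i.
Proof.
  induction n; [cbn; lia|]. rewrite sum_below_S. intros H.
  destruct (g n) eqn:E.
  - destruct IHn as [i [Hi Hg]]; [lia|]. exists i; split; auto.
  - exists n; split; [lia|]. rewrite E; lia.
Qed.

Lemma sum_below_trunc n j g : j <= n -> (forall l, j <= l -> l < n -> g l = 0) ->
  sum_below n g = sum_below j g.
Proof.
  induction n; intros Hj H.
  - assert (j = 0) by lia. subst j. reflexivity.
  - destruct (Nat.eq_dec j (S n)); [subst; reflexivity|].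
    rewrite sum_below_S, IHn; try lia; auto. rewrite H; lia.
Qed.

Lemma sum_below_zero n g : (forall l, l < n -> g l = 0) -> sum_below n g = 0.
Proof. intros H. rewrite (sum_below_trunc n 0); auto; lia. Qed.

Lemma sum_below_single n l0 g : l0 < n -> (forall l, l < n -> l <> l0 -> g l = 0) ->
  sum_below n g = g l0.
Proof.
  induction n; intros Hl H; [lia|]. rewrite sum_below_S.
  destruct (Nat.eq_dec l0 n).
  - subst. rewrite sum_below_zero; [lia|]. intros l Hl'. apply H; lia.
  - rewrite IHn, (H n); try lia. intros; apply H; lia.
Qed.

Lemma sum_below_add n g h : sum_below n (fun i => g i + h i) = sum_below n g + sum_below n h.
Proof. induction n; [reflexivity|]. rewrite !sum_below_S, IHn. lia. Qed.

Lemma sum_below_exch n r h :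
  sum_below n (fun l => sum_below r (fun i => h i l)) = sum_below r (fun i => sum_below n (h i)).
Proof.
  induction n.
  - symmetry. apply sum_below_zero. intros; reflexivity.
  - rewrite sum_below_S, IHn, <- sum_below_add. apply sum_below_ext. intros.
    rewrite sum_below_S. reflexivity.
Qed.

Lemma sum_below_mulr n g c : sum_below n g * c = sum_below n (fun i => g i * c).
Proof. induction n; [reflexivity|]. rewrite !sum_below_S, <- IHn. lia. Qed.

Lemma step_ext {X} (d : X -> X -> R) C (A A' : X -> Prop) : (forall x, A x <-> A' x) ->
  forall x, deriv_step d C A x -> deriv_step d C A' x.
Proof.
  intros H x [H1 H2]. split; [apply H; auto|].
  intros [U [HU [HUx [c [Hc Hi]]]]]. apply H2. exists U; split; auto; split; auto.
  exists c; split; auto. intros y Hy Hu. apply Hi; auto. apply H; auto.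
Qed.

Lemma clause_ext {X} d C W (S S' : rcar W -> X -> Prop) (B : rcar W -> Prop) :
  (forall v, B v -> forall x, S v x <-> S' v x) ->
  forall x, deriv_clause d C W S B x -> deriv_clause d C W S' B x.
Proof.
  intros H x [H1 H2]. split.
  - intros p Hp. apply (step_ext d C (S p) (S' p)); [apply H; exact (proj1 Hp) | apply H1, Hp].
  - intros Hn v Hv. apply H; auto.
Qed.

Lemma deriv_seq_unique {X} d C W (S S' : rcar W -> X -> Prop) : well_founded (rlt W) ->
  IsDerivSeq d C W S -> IsDerivSeq d C W S' -> forall u x, S u x <-> S' u x.
Proof.
  intros Wf H H' u. induction u as [u IH] using (well_founded_induction Wf). intros x.
  rewrite (H u x), (H' u x).
  split; apply clause_ext; intros v Hv y; [|symmetry]; apply IH; auto.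
Qed.

Definition deriv_rec {X} d C (W : RawOrd) (u : rcar W)
    (rec : forall v, rlt W v u -> X -> Prop) : X -> Prop :=
  fun x =>
    (forall p (Hp : IsMaxIn (rlt W) (fun v => rlt W v u) p), deriv_step d C (rec p (proj1 Hp)) x) /\
    ((~ exists p, IsMaxIn (rlt W) (fun v => rlt W v u) p) -> forall v (Hv : rlt W v u), rec v Hv x).

Lemma deriv_seq_exists {X} (d : X -> X -> R) C W : well_founded (rlt W) ->
  exists S : rcar W -> X -> Prop, IsDerivSeq d C W S.
Proof.
  intros Wf. set (S := Fix Wf (fun _ => X -> Prop) (deriv_rec d C W)). exists S.
  assert (E : forall u, S u = deriv_rec d C W u (fun v _ => S v)).
  { intros u. unfold S. refine (Fix_eq Wf (fun _ => X -> Prop) (deriv_rec d C W) _ u).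
    intros u' f g Hfg.
    assert (f = g) by (apply functional_extensionality_dep; intros;
                       apply functional_extensionality_dep; intros; apply Hfg).
    subst; reflexivity. }
  intros u x. rewrite E. apply iff_refl.
Qed.

Definition deriv_seq {X} (d : X -> X -> R) C (W : RawOrd) : rcar W -> X -> Prop :=
  match excluded_middle_informative (exists S, IsDerivSeq d C W S) with
  | left H => proj1_sig (constructive_indefinite_description _ H)
  | right _ => fun _ _ => False
  end.

Lemma deriv_seq_spec {X} (d : X -> X -> R) C W : well_founded (rlt W) ->
  IsDerivSeq d C W (deriv_seq d C W).
Proof.
  intros Wf. unfold deriv_seq. destruct (excluded_middle_informative _) as [H|n].
  - exact (proj2_sig (constructive_indefinite_description _ H)).
  - exfalso. apply n. apply deriv_seq_exists; auto.
Qed.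

Lemma clause_succ {X} d C W (S' : option (rcar W) -> X -> Prop) (Bo : option (rcar W) -> Prop)
  (B : rcar W -> Prop) :
  (forall w, Bo w <-> match w with Some a => B a | None => False end) ->
  forall x, deriv_clause d C (succ_ord W) S' Bo x <-> deriv_clause d C W (fun a => S' (Some a)) B x.
Proof.
  intros HB.
  assert (M1 : forall a, IsMaxIn (succ_lt W) Bo (Some a) <-> IsMaxIn (rlt W) B a).
  { intros a. unfold IsMaxIn. rewrite (HB (Some a)). split; intros [H1 H2]; split; auto.
    - intros b Hb. destruct (H2 (Some b)) as [E|E];
        [apply HB; exact Hb | left; congruence | right; exact E].
    - intros [b|] Hb; apply HB in Hb; [|contradiction].
      destruct (H2 b Hb) as [E|E]; [left; congruence | right; exact E]. }
  assert (M0 : ~ IsMaxIn (succ_lt W) Bo None). { intros [H _]. apply HB in H. exact H. }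
  intros x. unfold deriv_clause. split; intros [H1 H2]; split.
  - intros a Ha. apply (H1 (Some a)). apply M1; auto.
  - intros Hn a Ha. apply H2.
    + intros [[p|] Hp]; [apply Hn; exists p; apply M1; auto | apply M0; auto].
    + apply HB; exact Ha.
  - intros [p|] Hp; [apply H1; apply M1; auto | exfalso; apply M0; auto].
  - intros Hn [v|] Hv; apply HB in Hv; [|contradiction]. apply H2; auto.
    intros [p Hp]. apply Hn. exists (Some p). apply M1; auto.
Qed.

Lemma Deriv_top {X} d C W (S' : option (rcar W) -> X -> Prop) : well_founded (rlt W) ->
  IsDerivSeq d C (succ_ord W) S' -> forall x, Deriv d C W x <-> S' None x.
Proof.
  intros Wf H.
  assert (H1 : IsDerivSeq d C W (fun a => S' (Some a))).
  { intros u x. rewrite (H (Some u) x). apply clause_succ. intros [w|]; simpl; tauto. }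
  intros x. rewrite (H None x), (clause_succ d C W S' _ (fun _ => True))
    by (intros [w|]; simpl; tauto).
  split.
  - intros HD. apply HD, H1.
  - intros Hc S HS. revert Hc. apply clause_ext.
    intros v _ y. apply (deriv_seq_unique d C W _ _ Wf H1 HS).
Qed.

Lemma Deriv_empty {X} d C W : (forall w : rcar W, False) -> forall x : X, Deriv d C W x.
Proof. intros H x S _. split; [intros p _ | intros _ p _]; destruct (H p). Qed.

Lemma removed_after {X} d C W (S : rcar W -> X -> Prop) : IsWO W -> IsDerivSeq d C W S ->
  forall b U c y, IsOpen d U -> C c -> (forall z, S b z -> U z -> c z) -> U y ->
  forall v, rlt W b v -> ~ S v y.
Proof.
  intros [Wf [T To]] HS b U c y HU Hc Hi Uy v.
  induction v as [v IH] using (well_founded_induction Wf).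
  intros Hbv Sv. apply HS in Sv. destruct Sv as [H1 H2].
  destruct (classic (exists p, IsMaxIn (rlt W) (fun w => rlt W w v) p)) as [[p Hp]|Hn].
  - destruct (H1 p Hp) as [Sp Hnot]. destruct (proj2 Hp b Hbv) as [E|E].
    + subst p. apply Hnot. exists U. split; auto. split; auto. exists c. split; auto.
    + apply (IH p (proj1 Hp) E). exact Sp.
  - assert (exists w, rlt W w v /\ rlt W b w) as [w [Hw Hbw]].
    { apply NNPP. intros Hno. apply Hn. exists b. split; auto. intros w Hw.
      destruct (To w b) as [E|[E|E]]; auto. exfalso; apply Hno; eauto. }
    apply (IH w Hw Hbw). apply H2; auto.
Qed.

Lemma first_miss_pred {X} d C W (T : rcar W -> X -> Prop) u y : IsDerivSeq d C W T ->
  ~ T u y -> (forall u', rlt W u' u -> T u' y) ->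
  exists p, IsMaxIn (rlt W) (fun v => rlt W v u) p /\
    exists U c, IsOpen d U /\ U y /\ C c /\ forall z, T p z -> U z -> c z.
Proof.
  intros HT Hn Hb. rewrite (HT u y) in Hn. unfold deriv_clause in Hn.
  destruct (classic (exists p, IsMaxIn (rlt W) (fun v => rlt W v u) p /\
                               ~ deriv_step d C (T p) y)) as [[p [Hp Hs]]|Hno].
  - exists p. split; auto. apply NNPP. intros Hne. apply Hs.
    split; [apply Hb, (proj1 Hp)|]. intros [U [HU [Uy [c [Hc Hi]]]]]. apply Hne.
    exists U, c. auto.
  - exfalso. apply Hn. split.
    + intros p Hp. apply NNPP. intros Hs. apply Hno. eauto.
    + intros _ v Hv. apply Hb, Hv.
Qed.

Lemma stage_misses {X} d C W (T : rcar W -> X -> Prop) u p z U c : IsDerivSeq d C W T ->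
  IsMaxIn (rlt W) (fun v => rlt W v u) p -> IsOpen d U -> U z -> C c ->
  (forall z, T p z -> U z -> c z) -> ~ T u z.
Proof.
  intros HT Hp HU Uz Hc Hi Tz. apply HT in Tz. destruct Tz as [H1 _].
  destruct (H1 p Hp) as [_ Hs]. apply Hs. exists U. split; auto. split; auto.
  exists c. split; auto.
Qed.

Lemma first_miss_exists {X} (W : RawOrd) (T : rcar W -> X -> Prop) z u : IsWO W -> ~ T u z ->
  exists u', (~ T u' z /\ forall w, rlt W w u' -> T w z) /\ (u' = u \/ rlt W u' u).
Proof.
  intros [Wf [Tr To]] Hn. destruct (least_element W (fun w => ~ T w z) Wf u Hn) as [m [Hm Hmin]].
  exists m. split.
  - split; auto. intros w Hw. apply NNPP. apply Hmin; auto.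
  - destruct (To m u) as [E|[E|E]]; auto. exfalso. apply (Hmin u E Hn).
Qed.

Lemma open_inter {X} (d : X -> X -> R) (n : nat) (U : nat -> X -> Prop) :
  (forall i, i < n -> IsOpen d (U i)) -> IsOpen d (fun z => forall i, i < n -> U i z).
Proof.
  induction n; intros H x Hx.
  - exists 1%R. split; [lra|]. intros y _ i Hi; lia.
  - destruct (IHn (fun i Hi => H i ltac:(lia)) x (fun i Hi => Hx i ltac:(lia))) as [e1 [He1 H1]].
    destruct (H n ltac:(lia) x (Hx n ltac:(lia))) as [e2 [He2 H2]].
    exists (Rmin e1 e2). split; [apply Rmin_pos; auto|]. intros y Hy i Hi.
    destruct (Nat.eq_dec i n).
    + subst. apply H2. eapply Rlt_le_trans; [exact Hy | apply Rmin_r].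
    + apply H1; [eapply Rlt_le_trans; [exact Hy | apply Rmin_l] | lia].
Qed.

(* g < h iff they differ and h is larger at the largest point of difference; this
   mirrors the order of omega_pow. *)
Definition lexlt (A : RawOrd) (g h : rcar A -> nat) : Prop :=
  exists x, g x < h x /\ forall y, rlt A x y -> g y = h y.
Definition feq {T} (g h : T -> nat) : Prop := forall x, g x = h x.
Definition lexle (A : RawOrd) (g h : rcar A -> nat) : Prop := lexlt A g h \/ feq g h.
Definition finsupp {T} (g : T -> nat) : Prop := exists l, forall x, g x <> 0 -> In x l.
Definition addf {T} (g h : T -> nat) : T -> nat := fun x => g x + h x.
Definition sumF {T} (r : nat) (F : nat -> T -> nat) : T -> nat :=
  fun x => sum_below r (fun i => F i x).

Section LexOrder.
Variable A : RawOrd.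
Hypothesis A_WO : IsWO A.

Lemma lexlt_irrefl g : ~ lexlt A g g.
Proof. intros [x [H _]]. lia. Qed.

Lemma lexlt_ext g g' h h' : feq g g' -> feq h h' -> lexlt A g h -> lexlt A g' h'.
Proof.
  intros E1 E2 [x [H1 H2]]. exists x. rewrite <- E1, <- E2. split; auto.
  intros y Hy. rewrite <- E1, <- E2; auto.
Qed.

Lemma lexle_ext g g' h h' : feq g g' -> feq h h' -> lexle A g h -> lexle A g' h'.
Proof.
  intros E1 E2 [H|H];
    [left; eapply lexlt_ext; eauto | right; intros x; rewrite <- E1, <- E2; auto].
Qed.

Lemma lexlt_trans g h k : lexlt A g h -> lexlt A h k -> lexlt A g k.
Proof.
  destruct A_WO as [_ [T To]]. intros [x [H1 H2]] [x' [K1 K2]].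
  destruct (To x x') as [E|[E|E]].
  - exists x'. split; [rewrite H2; auto|]. intros y Hy. rewrite H2, K2; eauto.
  - subst x'. exists x. split; [lia|]. intros y Hy. rewrite H2, K2; auto.
  - exists x. split; [rewrite <- K2; auto|]. intros y Hy. rewrite H2, K2; eauto.
Qed.

Lemma lexle_lt_trans g h k : lexle A g h -> lexlt A h k -> lexlt A g k.
Proof.
  intros [H|H] K; [eapply lexlt_trans; eauto | eapply lexlt_ext; [| |exact K]; intro; auto].
Qed.

Lemma lexlt_le_trans g h k : lexlt A g h -> lexle A h k -> lexlt A g k.
Proof.
  intros H [K|K]; [eapply lexlt_trans; eauto | eapply lexlt_ext; [| |exact H]; intro; auto].
Qed.

Lemma lexle_trans g h k : lexle A g h -> lexle A h k -> lexle A g k.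
Proof.
  intros [H|H] K;
    [left; eapply lexlt_le_trans; eauto | eapply lexle_ext; [| |exact K]; intro; auto].
Qed.

Lemma lexlt_asym g h : lexlt A g h -> ~ lexle A h g.
Proof. intros H K. apply (lexlt_irrefl g). eapply lexlt_le_trans; eauto. Qed.

Lemma addf_lt a b c e : lexlt A a b -> lexle A c e -> lexlt A (addf a c) (addf b e).
Proof.
  destruct A_WO as [_ [T To]]. intros [x [H1 H2]] [[x' [K1 K2]]|K]; unfold addf.
  - destruct (To x x') as [E|[E|E]].
    + exists x'. split; [rewrite H2; auto; lia|]. intros y Hy. rewrite H2, K2; eauto.
    + subst x'. exists x. split; [lia|]. intros y Hy. rewrite H2, K2; auto.
    + exists x. split; [rewrite K2; auto; lia|]. intros y Hy. rewrite H2, K2; eauto.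
  - exists x. rewrite K. split; [lia|]. intros y Hy. rewrite H2, K; auto.
Qed.

Lemma addf_le a b c e : lexle A a b -> lexle A c e -> lexle A (addf a c) (addf b e).
Proof.
  intros [H|H] K; [left; apply addf_lt; auto|].
  destruct K as [K|K].
  - left. eapply lexlt_ext; [| |apply (addf_lt c e a a K (or_intror (fun x => eq_refl)))];
      intro; unfold addf; rewrite ?H; lia.
  - right. intro x. unfold addf. rewrite H, K. auto.
Qed.

Lemma sumF_S r (F : nat -> rcar A -> nat) : feq (sumF (S r) F) (addf (sumF r F) (F r)).
Proof. intro x. apply sum_below_S. Qed.

Lemma sumF_le r F G : (forall i, i < r -> lexle A (F i) (G i)) -> lexle A (sumF r F) (sumF r G).
Proof.
  induction r; intros H; [right; intro; reflexivity|].
  eapply lexle_ext; [intro; symmetry; apply sumF_S | intro; symmetry; apply sumF_S|].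
  apply addf_le; auto.
Qed.

Lemma sumF_lt r F G j : (forall i, i < r -> lexle A (F i) (G i)) ->
  j < r -> lexlt A (F j) (G j) -> lexlt A (sumF r F) (sumF r G).
Proof.
  induction r; intros H Hj Hl; [lia|].
  eapply lexlt_ext; [intro; symmetry; apply sumF_S | intro; symmetry; apply sumF_S|].
  destruct (Nat.eq_dec j r).
  - subst. eapply lexlt_ext; [intro; apply Nat.add_comm | intro; apply Nat.add_comm|].
    apply addf_lt; auto. apply sumF_le; auto.
  - apply addf_lt; auto. apply IHr; auto; lia.
Qed.

End LexOrder.

Lemma finsupp_ext {T} (g h : T -> nat) : feq g h -> finsupp g -> finsupp h.
Proof. intros E [l Hl]. exists l. intros x Hx. apply Hl. rewrite E. auto. Qed.

Lemma finsupp_sumF {T} r (F : nat -> T -> nat) :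
  (forall i, i < r -> finsupp (F i)) -> finsupp (sumF r F).
Proof.
  induction r; intros H.
  - exists nil. intros x Hx. exfalso. apply Hx. reflexivity.
  - destruct IHr as [l1 H1]; [intros; apply H; lia|]. destruct (H r) as [l2 H2]; [lia|].
    exists (l1 ++ l2). intros x Hx. apply in_or_app. unfold sumF in Hx, H1.
    rewrite sum_below_S in Hx.
    destruct (F r x) eqn:E; [left; apply H1; lia | right; apply H2; lia].
Qed.

(* Inside E, omega^(xi j) becomes the codes supported below [top j]. *)
Definition IsExpFrame (xi : nat -> RawOrd) (s : nat) (E : RawOrd)
    (emb : forall j, rcar (xi j) -> rcar E) (top : nat -> rcar E) : Prop :=
  IsWO E /\
  (forall j, j < s -> forall a a', emb j a = emb j a' -> a = a') /\
  (forall j, j < s -> forall a a', rlt (xi j) a a' <-> rlt E (emb j a) (emb j a')) /\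
  (forall j, j < s -> forall a, rlt E (emb j a) (top j)) /\
  (forall j, j < s -> forall y, rlt E y (top j) -> exists a, emb j a = y) /\
  (forall l l', l < l' -> l' < s -> rlt E (top l') (top l)).

Definition indc (P : Prop) : nat := if excluded_middle_informative P then 1 else 0.

Lemma indc_true (P : Prop) : P -> indc P = 1.
Proof. intros H. unfold indc. destruct (excluded_middle_informative P); tauto. Qed.

Lemma indc_false (P : Prop) : ~ P -> indc P = 0.
Proof. intros H. unfold indc. destruct (excluded_middle_informative P); tauto. Qed.

Section CnfCode.
Variables (xi : nat -> RawOrd) (s : nat) (E : RawOrd).
Variables (emb : forall j, rcar (xi j) -> rcar E) (top : nat -> rcar E).
Hypothesis frame : IsExpFrame xi s E emb top.

Let E_WO : IsWO E := proj1 frame.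
Let emb_inj := proj1 (proj2 frame).
Let emb_iso := proj1 (proj2 (proj2 frame)).
Let emb_below := proj1 (proj2 (proj2 (proj2 frame))).
Let emb_onto := proj1 (proj2 (proj2 (proj2 (proj2 frame)))).
Let top_dec := proj2 (proj2 (proj2 (proj2 (proj2 frame)))).

Lemma E_irrefl y : ~ rlt E y y.
Proof. apply wf_irrefl, E_WO. Qed.

Lemma E_trans y1 y2 y3 : rlt E y1 y2 -> rlt E y2 y3 -> rlt E y1 y3.
Proof. apply E_WO. Qed.

Lemma top_inj l l' : l < s -> l' < s -> top l = top l' -> l = l'.
Proof.
  intros H1 H2 Heq. destruct (lt_eq_lt_dec l l') as [[H|H]|H]; auto; exfalso.
  - apply (E_irrefl (top l)). rewrite Heq at 1. apply top_dec; auto.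
  - apply (E_irrefl (top l)). rewrite Heq at 2. apply top_dec; auto.
Qed.

Lemma top_ge l j : l <= j -> j < s -> top l = top j \/ rlt E (top j) (top l).
Proof.
  intros H1 H2. destruct (Nat.eq_dec l j); [left; subst; auto | right; apply top_dec; lia].
Qed.

(* The code of omega^(xi 0) m_0 + ... + omega^(xi (s-1)) m_(s-1): m_l at [top l]. *)
Definition cnf_code (m : nat -> nat) (y : rcar E) : nat :=
  sum_below s (fun l => m l * indc (y = top l)).

Definition transport j (f : rcar (xi j) -> nat) (y : rcar E) : nat :=
  match excluded_middle_informative (exists a, emb j a = y) with
  | left H => f (proj1_sig (constructive_indefinite_description _ H))
  | right _ => 0
  end.

(* The code of omega^(xi 0) m_0 + ... + omega^(xi (j-1)) m_(j-1) + omega^(xi j) k + f,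
   with f an element of omega^(xi j). *)
Definition elem_code (m : nat -> nat) j k (f : rcar (xi j) -> nat) (y : rcar E) : nat :=
  sum_below j (fun l => m l * indc (y = top l)) + k * indc (y = top j) + transport j f y.

Lemma transport_emb j f a : j < s -> transport j f (emb j a) = f a.
Proof.
  intros Hj. unfold transport. destruct (excluded_middle_informative _) as [H|n].
  - destruct (constructive_indefinite_description _ H) as [a' Ha']. simpl.
    f_equal. apply (emb_inj j Hj); auto.
  - exfalso; apply n; eauto.
Qed.

Lemma transport_out j f y : (forall a, emb j a <> y) -> transport j f y = 0.
Proof.
  intros H. unfold transport. destruct (excluded_middle_informative _) as [[a Ha]|n]; auto.
  exfalso; eapply H; eauto.
Qed.

Lemma cnf_code_top m j : j < s -> cnf_code m (top j) = m j.
Proof.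
  intros Hj. unfold cnf_code. rewrite (sum_below_single s j); auto.
  - rewrite indc_true; auto; lia.
  - intros l Hl Hn. rewrite indc_false; [lia|]. intros Heq. apply Hn. symmetry.
    apply top_inj; auto.
Qed.

Lemma cnf_code_out m y : (forall l, l < s -> y <> top l) -> cnf_code m y = 0.
Proof. intros H. apply sum_below_zero. intros l Hl. rewrite indc_false; auto; lia. Qed.

Lemma elem_code_above m j k f y : j < s -> rlt E (top j) y -> elem_code m j k f y = cnf_code m y.
Proof.
  intros Hj Hy.
  assert (Hne : forall l, j <= l -> l < s -> y <> top l).
  { intros l H1 H2 Heq. subst y. destruct (top_ge j l H1 H2) as [Heq|Heq].
    - rewrite Heq in Hy. apply (E_irrefl _ Hy).
    - apply (E_irrefl (top l)). eapply E_trans; eauto. }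
  unfold elem_code, cnf_code. rewrite (sum_below_trunc s j); [|lia|].
  - rewrite (indc_false (y = top j)); [|apply Hne; lia]. rewrite transport_out; [lia|].
    intros a Heq. subst y. apply (E_irrefl (top j)).
    eapply E_trans; [exact Hy | apply emb_below; auto].
  - intros l H1 H2. rewrite indc_false; [lia|]. apply Hne; auto.
Qed.

Lemma elem_code_at m j k f : j < s -> elem_code m j k f (top j) = k.
Proof.
  intros Hj. unfold elem_code. rewrite sum_below_zero.
  - rewrite indc_true; auto. rewrite transport_out; [lia|]. intros a Heq.
    apply (E_irrefl (top j)). rewrite <- Heq at 1. apply emb_below; auto.
  - intros l Hl. rewrite indc_false; [lia|]. intros Heq. apply top_inj in Heq; lia.
Qed.

Lemma elem_code_emb m j k f a : j < s -> elem_code m j k f (emb j a) = f a.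
Proof.
  intros Hj. pose proof (emb_below j Hj a) as Ha.
  assert (Hne : forall l, l <= j -> emb j a <> top l).
  { intros l Hl Heq. destruct (top_ge l j Hl Hj) as [Heq'|Heq'].
    - rewrite Heq, Heq' in Ha. apply (E_irrefl _ Ha).
    - rewrite Heq in Ha. apply (E_irrefl (top l)). eapply E_trans; eauto. }
  unfold elem_code. rewrite sum_below_zero.
  - rewrite indc_false; [|apply Hne; lia]. rewrite transport_emb; auto. lia.
  - intros l Hl. rewrite indc_false; [lia|]. apply Hne; lia.
Qed.

Definition cnf_elem_code m (z : rcar (cnf s xi m)) : rcar E -> nat :=
  elem_code m (projT1 (proj1_sig z)) (proj1_sig (fst (projT2 (proj1_sig z))))
    (proj1_sig (snd (projT2 (proj1_sig z)))).

Lemma cnf_elem_code_mono m z z' : rlt (cnf s xi m) z z' ->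
  lexlt E (cnf_elem_code m z) (cnf_elem_code m z').
Proof.
  destruct E_WO as [_ [_ ETo]].
  destruct z as [[j [[k Hk] [f Hf]]] Hj], z' as [[j' [[k' Hk'] [f' Hf']]] Hj'].
  unfold cnf_elem_code; simpl. intros [H|[e H]]; simpl in *.
  - assert (Htt : rlt E (top j') (top j)) by (apply top_dec; auto).
    exists (top j). split.
    + rewrite elem_code_at, (elem_code_above m j' k' f' (top j)), cnf_code_top; auto.
    + intros y Hy. rewrite (elem_code_above m j), (elem_code_above m j'); eauto using E_trans.
  - destruct e. simpl in H. destruct H as [H|[Ekk H]]; simpl in H.
    + exists (top j). split.
      * rewrite !elem_code_at; auto.
      * intros y Hy. rewrite !(elem_code_above m j); auto.
    + destruct H as [x [Hx1 Hx2]]. subst k'. exists (emb j x). split.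
      * rewrite !elem_code_emb; auto.
      * intros y Hy. destruct (ETo y (top j)) as [Hbelow|[Heq|Habove]].
        -- destruct (emb_onto j Hj y Hbelow) as [b <-].
           rewrite !elem_code_emb; auto. apply Hx2. apply (emb_iso j Hj). exact Hy.
        -- subst y. rewrite !elem_code_at; auto.
        -- rewrite !(elem_code_above m j); auto.
Qed.

Lemma cnf_elem_code_lt m z : lexlt E (cnf_elem_code m z) (cnf_code m).
Proof.
  destruct z as [[j [[k Hk] [f Hf]]] Hj]. unfold cnf_elem_code; simpl in *.
  exists (top j). split.
  - rewrite elem_code_at, cnf_code_top; auto.
  - intros y Hy. rewrite (elem_code_above m j); auto.
Qed.

Lemma in_tops y l : l < s -> y = top l -> In y (map top (seq 0 s)).
Proof. intros H ->. apply in_map, in_seq. lia. Qed.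

Lemma cnf_code_fin m : finsupp (cnf_code m).
Proof.
  exists (map top (seq 0 s)). intros y Hy. apply NNPP. intros Hn. apply Hy.
  apply cnf_code_out. intros l Hl Heq. apply Hn. eapply in_tops; eauto.
Qed.

Lemma cnf_elem_code_fin m z : finsupp (cnf_elem_code m z).
Proof.
  destruct E_WO as [_ [_ ETo]].
  destruct z as [[j [[k Hk] [f [lf Hf]]]] Hj]. unfold cnf_elem_code; simpl in *.
  exists (map top (seq 0 s) ++ map (emb j) lf). intros y Hy. apply in_or_app.
  destruct (ETo y (top j)) as [Hbelow|[Heq|Habove]].
  - destruct (emb_onto j Hj y Hbelow) as [b <-].
    right. apply in_map. apply Hf. rewrite elem_code_emb in Hy; auto.
  - left. eapply in_tops; eauto.
  - left. rewrite (elem_code_above m j) in Hy; auto. apply NNPP. intros Hn. apply Hy.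
    apply cnf_code_out. intros l Hl Heq'. apply Hn. eapply in_tops; eauto.
Qed.

Lemma finsupp_emb j g : j < s -> finsupp g -> finsupp (fun a => g (emb j a)).
Proof.
  intros Hj [lg Hlg].
  assert (Hl : exists l, forall a, In (emb j a) lg -> In a l).
  { clear Hlg. induction lg as [|y lg IH].
    - exists nil. intros a [].
    - destruct IH as [l Hl]. destruct (classic (exists a, emb j a = y)) as [[a0 Ha0]|Hn].
      + exists (a0 :: l). intros a [Heq|Heq]; [left | right; auto].
        apply (emb_inj j Hj). congruence.
      + exists l. intros a [Heq|Heq]; auto. exfalso; eauto. }
  destruct Hl as [l Hl]. exists l. intros a Ha. apply Hl, Hlg, Ha.
Qed.

Lemma cnf_elem_code_onto m g : finsupp g -> lexlt E g (cnf_code m) ->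
  exists z, feq (cnf_elem_code m z) g.
Proof.
  destruct E_WO as [_ [_ ETo]].
  intros Hg [x [H1 H2]].
  assert (exists j, j < s /\ x = top j) as [j [Hj ->]].
  { apply NNPP; intros Hn. rewrite cnf_code_out in H1; [lia|]. intros l Hl Heq; apply Hn; eauto. }
  rewrite cnf_code_top in H1; auto.
  exists (exist _ (existT _ j (exist _ (g (top j)) H1,
                               exist _ (fun a => g (emb j a)) (finsupp_emb j g Hj Hg))) Hj
          : rcar (cnf s xi m)).
  intros y. unfold cnf_elem_code; simpl.
  destruct (ETo y (top j)) as [Hbelow|[Heq|Habove]].
  - destruct (emb_onto j Hj y Hbelow) as [b <-]. rewrite elem_code_emb; auto.
  - subst; rewrite elem_code_at; auto.
  - rewrite elem_code_above; auto. symmetry; apply H2; auto.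
Qed.

(* The code of u in A + 1, for A isomorphic to cnf s xi m (the top codes the whole). *)
Definition ord_code (A : RawOrd) (m : nat -> nat) (u : option (rcar A)) : rcar E -> nat :=
  match u with
  | None => cnf_code m
  | Some a =>
      match excluded_middle_informative (OrdIso A (cnf s xi m)) with
      | left H => cnf_elem_code m (proj1_sig (constructive_indefinite_description _ H) a)
      | right _ => fun _ => 0
      end
  end.

Lemma ord_code_spec A m : OrdIso A (cnf s xi m) -> exists f : rcar A -> rcar (cnf s xi m),
  ((forall a a', f a = f a' -> a = a') /\ (forall b, exists a, f a = b) /\
   (forall a a', rlt A a a' <-> rlt (cnf s xi m) (f a) (f a'))) /\
  forall a, ord_code A m (Some a) = cnf_elem_code m (f a).
Proof.
  intros H. unfold ord_code. destruct (excluded_middle_informative _) as [H'|n]; [|contradiction].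
  exists (proj1_sig (constructive_indefinite_description _ H')).
  split; [exact (proj2_sig (constructive_indefinite_description _ H')) | reflexivity].
Qed.

Section OrdCode.
Variables (A : RawOrd) (m : nat -> nat).
Hypothesis A_iso : OrdIso A (cnf s xi m).

Lemma ord_code_mono u v : succ_lt A u v -> lexlt E (ord_code A m u) (ord_code A m v).
Proof.
  destruct (ord_code_spec A m A_iso) as [f [[F1 [F2 F3]] Ef]].
  destruct u as [a|], v as [b|]; intros Huv; simpl in Huv; try contradiction.
  - rewrite !Ef. apply cnf_elem_code_mono, F3, Huv.
  - rewrite Ef. apply cnf_elem_code_lt.
Qed.

Lemma ord_code_fin u : finsupp (ord_code A m u).
Proof.
  destruct (ord_code_spec A m A_iso) as [f [_ Ef]].
  destruct u as [a|]; [rewrite Ef; apply cnf_elem_code_fin | apply cnf_code_fin].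
Qed.

Lemma ord_code_le_top u : lexle E (ord_code A m u) (ord_code A m None).
Proof. destruct u as [a|]; [left; apply ord_code_mono; exact I | right; intro; reflexivity]. Qed.

Lemma ord_code_onto g : finsupp g -> lexle E g (ord_code A m None) ->
  exists u, feq (ord_code A m u) g.
Proof.
  destruct (ord_code_spec A m A_iso) as [f [[F1 [F2 F3]] Ef]].
  intros Hg [Hl|He].
  - destruct (cnf_elem_code_onto m g Hg Hl) as [z Hz]. destruct (F2 z) as [a <-].
    exists (Some a). rewrite Ef. exact Hz.
  - exists None. intro y. symmetry. apply He.
Qed.

Lemma ord_code_le u v : IsWO A -> lexle E (ord_code A m u) (ord_code A m v) ->
  u = v \/ succ_lt A u v.
Proof.
  intros W Hle. destruct (succ_ord_WO A W) as [_ [_ To]].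
  destruct (To u v) as [Hlt|[Heq|Hgt]]; auto. exfalso.
  apply (lexlt_asym E E_WO _ _ (ord_code_mono v u Hgt) Hle).
Qed.

End OrdCode.

Lemma cnf_code_sum r (m : nat -> nat -> nat) :
  feq (cnf_code (fun j => sum_below r (fun i => m i j))) (sumF r (fun i => cnf_code (m i))).
Proof.
  intro y. unfold cnf_code, sumF.
  rewrite <- (sum_below_exch s r (fun i l => m i l * indc (y = top l))).
  apply sum_below_ext. intros l _. rewrite sum_below_mulr. reflexivity.
Qed.

End CnfCode.

Definition IsLtWitness (A B : RawOrd) (b : rcar B) (f : rcar A -> rcar B) : Prop :=
  (forall a a', f a = f a' -> a = a') /\
  (forall a, rlt B (f a) b) /\
  (forall b', rlt B b' b -> exists a, f a = b') /\
  (forall a a', rlt A a a' <-> rlt B (f a) (f a')).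

Definition lt_witness (A B : RawOrd) (H : OrdLt A B) :
    {b : rcar B & {f : rcar A -> rcar B | IsLtWitness A B b f}} :=
  let s := constructive_indefinite_description (fun b => exists f, IsLtWitness A B b f) H in
  existT _ (proj1_sig s) (constructive_indefinite_description _ (proj2_sig s)).

(* Chosen embedding and bound for OrdLt A B (meaningless when A is not below B). *)
Definition lt_map (A B : RawOrd) (a : rcar A) : option (rcar B) :=
  match excluded_middle_informative (OrdLt A B) with
  | left H => Some (proj1_sig (projT2 (lt_witness A B H)) a)
  | right _ => None
  end.

Definition lt_bound (A B : RawOrd) : option (rcar B) :=
  match excluded_middle_informative (OrdLt A B) with
  | left H => Some (projT1 (lt_witness A B H))
  | right _ => None
  end.

Lemma lt_witness_spec A B : OrdLt A B -> exists b f, IsLtWitness A B b f /\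
  lt_bound A B = Some b /\ forall a, lt_map A B a = Some (f a).
Proof.
  intros H. unfold lt_map, lt_bound.
  destruct (excluded_middle_informative (OrdLt A B)) as [H'|n]; [|contradiction].
  exists (projT1 (lt_witness A B H')), (proj1_sig (projT2 (lt_witness A B H'))).
  split; [exact (proj2_sig (projT2 (lt_witness A B H'))) | split; reflexivity].
Qed.

Fixpoint chain_emb (xi : nat -> RawOrd) (j : nat) : rcar (xi j) -> option (rcar (xi 0)) :=
  match j as j0 return rcar (xi j0) -> option (rcar (xi 0)) with
  | 0 => fun a => Some a
  | S j' => fun a =>
      match lt_map (xi (S j')) (xi j') a with Some b => chain_emb xi j' b | None => None end
  end.

Definition chain_top (xi : nat -> RawOrd) (j : nat) : option (rcar (xi 0)) :=
  match j with
  | 0 => None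
  | S j' =>
      match lt_bound (xi (S j')) (xi j') with Some b => chain_emb xi j' b | None => None end
  end.

Section ExponentFrame.
Variables (xi : nat -> RawOrd) (s : nat).
Hypothesis s_pos : 0 < s.
Hypothesis xi_WO : forall j, j < s -> IsWO (xi j).
Hypothesis xi_dec : forall j, S j < s -> OrdLt (xi (S j)) (xi j).

Let E_WO : IsWO (succ_ord (xi 0)) := succ_ord_WO _ (xi_WO 0 s_pos).

Lemma chain_emb_props j : j < s ->
  (forall a a', chain_emb xi j a = chain_emb xi j a' -> a = a') /\
  (forall a a', rlt (xi j) a a' <-> succ_lt (xi 0) (chain_emb xi j a) (chain_emb xi j a')) /\
  (forall a, succ_lt (xi 0) (chain_emb xi j a) (chain_top xi j)) /\
  (forall y, succ_lt (xi 0) y (chain_top xi j) -> exists a, chain_emb xi j a = y).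
Proof.
  destruct E_WO as [_ [ET _]].
  induction j; intros Hj.
  - split; [|split; [|split]].
    + intros a a' Heq; simpl in Heq; congruence.
    + intros a a'; simpl; tauto.
    + intros a; simpl; auto.
    + intros [y|] Hy; [exists y; reflexivity | contradiction].
  - destruct IHj as [I1 [I2 [I3 I4]]]; [lia|].
    destruct (lt_witness_spec _ _ (xi_dec j Hj)) as [b [f [[F1 [F2 [F3 F4]]] [Eb Ef]]]].
    assert (Ee : forall a, chain_emb xi (S j) a = chain_emb xi j (f a)).
    { intros a. simpl. rewrite Ef. reflexivity. }
    assert (Et : chain_top xi (S j) = chain_emb xi j b). { simpl. rewrite Eb. reflexivity. }
    split; [|split; [|split]].
    + intros a a' Heq. rewrite !Ee in Heq. apply F1, I1, Heq.
    + intros a a'. rewrite !Ee, F4. apply I2.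
    + intros a. rewrite Ee, Et. apply I2, F2.
    + intros y Hy. rewrite Et in Hy.
      destruct (I4 y) as [a' Ha']. { eapply ET; [exact Hy | apply I3]. }
      subst y. apply I2 in Hy. destruct (F3 a' Hy) as [a'' Ha''].
      exists a''. rewrite Ee, Ha''. reflexivity.
Qed.

Lemma chain_top_dec l l' : l < l' -> l' < s -> succ_lt (xi 0) (chain_top xi l') (chain_top xi l).
Proof.
  destruct E_WO as [_ [ET _]].
  intros Hl. induction l'; [lia|]. intros Hs.
  assert (H1 : succ_lt (xi 0) (chain_top xi (S l')) (chain_top xi l')).
  { destruct (lt_witness_spec _ _ (xi_dec l' Hs)) as [b [f [_ [Eb _]]]].
    simpl. rewrite Eb. apply (chain_emb_props l'); lia. }
  destruct (Nat.eq_dec l l'); [subst; auto|]. eapply ET; [exact H1 | apply IHl'; lia].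
Qed.

Lemma exponent_frame_exists :
  exists E emb top, IsExpFrame xi s E emb top.
Proof.
  exists (succ_ord (xi 0)), (chain_emb xi), (chain_top xi).
  split; [exact E_WO|]. split; [|split; [|split; [|split]]];
    try (intros j Hj; apply (chain_emb_props j Hj)).
  exact chain_top_dec.
Qed.

End ExponentFrame.

Lemma iso_WO_inv A B : OrdIso A B -> IsWO B -> IsWO A.
Proof. intros [f [Hi [_ Hf]]]. apply (embed_WO A B f); auto. Qed.

(* A coefficientwise sum of Cantor normal forms of well-orders is a well-order: each
   omega^(xi j) with a nonzero coefficient embeds into one of the summands. *)
Lemma cnf_sum_WO s xi r (m : nat -> nat -> nat) (nu : nat -> RawOrd) :
  (forall i, i < r -> IsWO (nu i)) -> (forall i, i < r -> OrdIso (nu i) (cnf s xi (m i))) ->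
  IsWO (cnf s xi (fun j => sum_below r (fun i => m i j))).
Proof.
  intros Hnu Hiso. apply sum_WO. intros j Hj. cbv beta.
  destruct (Nat.eq_dec (sum_below r (fun i => m i j)) 0) as [Heq|Hne];
    [rewrite Heq; apply mul0_WO|].
  apply mul_WO. destruct (sum_below_pos r (fun i => m i j)) as [i [Hi Hm]]; [lia|].
  apply (embed_WO _ _ (fun f => exist _ (existT _ j (exist _ 0 Hm, f)) Hj
                                : rcar (cnf s xi (m i)))).
  - intros f f' Heq. injection Heq. intros Heq'.
    apply inj_pair2_eq_dec in Heq'; [congruence | exact Nat.eq_dec].
  - intros f f'. simpl. split.
    + intros H. right. exists eq_refl. simpl. right. split; auto.
    + intros [H|[e H]]; [lia|]. rewrite (UIP_refl_nat _ e) in H. simpl in H.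
      destruct H as [H|[_ H]]; [lia | exact H].
  - eapply iso_WO; eauto.
Qed.

Section NaturalSumBound.
Variables (X : Type) (d : X -> X -> R) (r : nat) (C : nat -> (X -> Prop) -> Prop).
Variables (nu : nat -> RawOrd) (gamma : RawOrd) (s : nat) (xi : nat -> RawOrd).
Variable m : nat -> nat -> nat.
Variables (E : RawOrd) (emb : forall j, rcar (xi j) -> rcar E) (top : nat -> rcar E).
Hypothesis r_pos : 0 < r.
Hypothesis nu_WO : forall i, i < r -> IsWO (nu i).
Hypothesis frame : IsExpFrame xi s E emb top.
Hypothesis nu_iso : forall i, i < r -> OrdIso (nu i) (cnf s xi (m i)).
Hypothesis gamma_iso : OrdIso gamma (cnf s xi (fun j => sum_below r (fun i => m i j))).

Let E_WO : IsWO E := proj1 frame.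
Let gamma_WO : IsWO gamma := iso_WO_inv _ _ gamma_iso (cnf_sum_WO s xi r m nu nu_WO nu_iso).
Let gammaS_WO : IsWO (succ_ord gamma) := succ_ord_WO gamma gamma_WO.

Definition Q : option (rcar gamma) -> X -> Prop := deriv_seq d (meet_family r C) (succ_ord gamma).
Definition P i : option (rcar (nu i)) -> X -> Prop := deriv_seq d (C i) (succ_ord (nu i)).

Let Q_seq : IsDerivSeq d (meet_family r C) (succ_ord gamma) Q :=
  deriv_seq_spec d _ _ (proj1 gammaS_WO).

Lemma P_seq i : i < r -> IsDerivSeq d (C i) (succ_ord (nu i)) (P i).
Proof. intros Hi. apply deriv_seq_spec, succ_ord_WO, nu_WO, Hi. Qed.

Definition code_nu i : option (rcar (nu i)) -> rcar E -> nat :=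
  ord_code xi s E emb top (nu i) (m i).
Definition code_gamma : option (rcar gamma) -> rcar E -> nat :=
  ord_code xi s E emb top gamma (fun j => sum_below r (fun i => m i j)).

Definition IsRank i y (u : option (rcar (nu i))) : Prop :=
  ~ P i u y /\ forall u', succ_lt (nu i) u' u -> P i u' y.

Definition RankCode i y (G : rcar E -> nat) : Prop :=
  exists u, IsRank i y u /\ feq G (code_nu i u).

Lemma rank_code_fin i y G : i < r -> RankCode i y G -> finsupp G.
Proof.
  intros Hi [u [_ HG]]. apply (finsupp_ext _ _ (fun e => eq_sym (HG e))).
  apply ord_code_fin; auto.
Qed.

Record LocalWitness i y G (Gp : rcar E -> nat) (U c : X -> Prop) : Prop := {
  lw_lt : lexlt E Gp G;
  lw_fin : finsupp Gp;
  lw_open : IsOpen d U;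
  lw_at : U y;
  lw_mem : C i c;
  lw_near : forall z, U z ->
    exists G', RankCode i z G' /\ lexle E G' G /\ (c z \/ lexle E G' Gp)
}.
Arguments lw_lt {i y G Gp U c}.
Arguments lw_fin {i y G Gp U c}.
Arguments lw_open {i y G Gp U c}.
Arguments lw_at {i y G Gp U c}.
Arguments lw_mem {i y G Gp U c}.
Arguments lw_near {i y G Gp U c}.

(* If y first leaves P i at the successor stage p + 1, because of U and c, then near y
   every point has left P i by stage p + 1, and it is in c unless it left by stage p. *)
Lemma rank_code_local i y G : i < r -> RankCode i y G ->
  exists Gp U c, LocalWitness i y G Gp U c.
Proof.
  intros Hi [u [[Hu Hbelow] HG]].
  destruct (first_miss_pred d (C i) (succ_ord (nu i)) (P i) u y (P_seq i Hi) Hu Hbelow)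
    as [p [Hp [U [c [HU [Uy [Hc Hpc]]]]]]].
  assert (Hpu : lexlt E (code_nu i p) G).
  { eapply lexlt_ext; [intro; reflexivity | intro; symmetry; apply HG |].
    apply ord_code_mono; [exact frame | apply nu_iso, Hi | exact (proj1 Hp)]. }
  exists (code_nu i p), U, c. split; auto.
  { apply ord_code_fin; [exact frame | apply nu_iso, Hi]. }
  intros z Uz.
  assert (Hz : ~ P i u z)
    by exact (stage_misses d (C i) (succ_ord (nu i)) (P i) u p z U c (P_seq i Hi) Hp HU Uz
                Hc Hpc).
  destruct (first_miss_exists (succ_ord (nu i)) (P i) z u (succ_ord_WO _ (nu_WO i Hi)) Hz)
    as [u' [Hu' [Heq|Hlt]]].
  - subst u'. exists G. split; [exists u; auto|]. split; [right; intro; reflexivity|].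
    left. apply Hpc; [apply (proj2 Hu'), (proj1 Hp) | exact Uz].
  - assert (Hle : lexle E (code_nu i u') (code_nu i p)).
    { destruct (proj2 Hp u' Hlt) as [->|Hlt'];
        [right; intro; reflexivity | left; apply ord_code_mono; auto]. }
    exists (code_nu i u'). split; [exists u'; split; [exact Hu' | intro; reflexivity]|].
    split; [left; apply (lexle_lt_trans E E_WO _ _ _ Hle Hpu) | right; exact Hle].
Qed.

Lemma code_realized b G : finsupp G -> lexle E G (code_gamma b) ->
  exists b', feq (code_gamma b') G /\ (b' = b \/ succ_lt gamma b' b).
Proof.
  intros Hfin Hle.
  destruct (ord_code_onto xi s E emb top frame gamma _ gamma_iso G Hfin) as [b' Hb'].
  { eapply lexle_trans; [exact E_WO | exact Hle | apply ord_code_le_top; auto]. }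
  exists b'. split; auto. apply (ord_code_le xi s E emb top frame gamma _ gamma_iso _ _ gamma_WO).
  eapply lexle_ext; [intro; symmetry; apply Hb' | intro; reflexivity | exact Hle].
Qed.

Definition lowered (F Fp : nat -> rcar E -> nat) j : rcar E -> nat :=
  sumF r (fun i => if Nat.eq_dec i j then Fp i else F i).

Lemma lowered_realized w F Fp j : j < r -> feq (code_gamma w) (sumF r F) ->
  (forall i, i < r -> finsupp (Fp i) /\ lexlt E (Fp i) (F i)) ->
  (forall i, i < r -> finsupp (F i)) ->
  exists b, feq (code_gamma b) (lowered F Fp j) /\ succ_lt gamma b w.
Proof.
  intros Hj Hw HFp HF.
  assert (Hlt : lexlt E (lowered F Fp j) (code_gamma w)).
  { eapply lexlt_ext; [intro; reflexivity | intro; symmetry; apply Hw |].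
    apply (sumF_lt E E_WO r _ _ j); auto.
    - intros i Hi. destruct (Nat.eq_dec i j); [left; apply HFp; auto | right; intro; reflexivity].
    - destruct (Nat.eq_dec j j) as [_|]; [apply HFp; auto | congruence]. }
  destruct (code_realized w (lowered F Fp j)) as [b [Hb [Heq|Hbw]]].
  - apply finsupp_sumF. intros i Hi. destruct (Nat.eq_dec i j); [apply HFp | apply HF]; auto.
  - left; exact Hlt.
  - subst b. exfalso. apply (lexlt_irrefl E (code_gamma w)).
    eapply lexlt_ext; [intro; symmetry; apply Hb | intro; reflexivity | exact Hlt].
  - exists b; auto.
Qed.

Definition ExcludedFrom (w : option (rcar gamma)) : Prop :=
  forall y F, (forall i, i < r -> RankCode i y (F i)) -> feq (code_gamma w) (sumF r F) ->
  forall v, v = w \/ succ_lt gamma w v -> ~ Q v y.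

(* Inductive step, key point: if beta < w bounds the stages coding the lowered sums,
   a point of Q beta near y keeps all its ranks, hence lies in every c i. *)
Lemma kept_ranks w F Fp (U c : nat -> X -> Prop) b beta :
  (forall w', succ_lt gamma w' w -> ExcludedFrom w') ->
  (forall i, i < r -> forall z, U i z ->
     exists G', RankCode i z G' /\ lexle E G' (F i) /\ (c i z \/ lexle E G' (Fp i))) ->
  (forall j, j < r -> feq (code_gamma (b j)) (lowered F Fp j)) ->
  (forall j, j < r -> b j = beta \/ succ_lt gamma (b j) beta) ->
  succ_lt gamma beta w ->
  forall z, Q beta z -> (forall i, i < r -> U i z) -> forall i, i < r -> c i z.
Proof.
  intros IH Hnear Hb Hmax Hbeta z Qz Uz j Hj. apply NNPP. intros Hcj.
  destruct (finite_choice r (fun i G' => RankCode i z G' /\ lexle E G' (F i) /\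
                                         (c i z \/ lexle E G' (Fp i))) (fun _ => 0))
    as [F' HF']; [intros i Hi; apply Hnear; auto|].
  assert (Hsum : lexle E (sumF r F') (code_gamma beta)).
  { apply (lexle_trans E E_WO _ (lowered F Fp j)).
    - apply sumF_le; auto. intros i Hi. destruct (Nat.eq_dec i j) as [->|]; [|apply HF'; auto].
      destruct (HF' j Hj) as [_ [_ [Hc|Hle]]]; [contradiction | exact Hle].
    - eapply lexle_ext; [apply Hb; auto | intro; reflexivity |].
      destruct (Hmax j Hj) as [->|Hlt]; [right; intro; reflexivity | left].
      apply ord_code_mono; auto. }
  destruct (code_realized beta (sumF r F')) as [w' [Hw' Hw'b]]; auto.
  { apply finsupp_sumF. intros i Hi. apply (rank_code_fin i z); auto. apply HF', Hi. }
  assert (Hw'w : succ_lt gamma w' w).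
  { destruct Hw'b as [->|Hlt]; [exact Hbeta | apply (proj1 (proj2 gammaS_WO) _ beta); auto]. }
  apply (IH w' Hw'w z F' (fun i Hi => proj1 (HF' i Hi))
           Hw' beta); [|exact Qz].
  destruct Hw'b as [->|Hlt]; auto.
Qed.

(* Induction on w: around y, intersect the local witnesses of all ranks; the stage
   beta below w bounding the lowered sums then removes y at beta + 1 <= w. *)
Lemma excluded_from_all w : ExcludedFrom w.
Proof.
  induction w as [w IH] using (well_founded_induction (proj1 gammaS_WO)).
  intros y F HF Hw v Hv.
  assert (Hdata : forall i, i < r -> exists t : (rcar E -> nat) * (X -> Prop) * (X -> Prop),
             LocalWitness i y (F i) (fst (fst t)) (snd (fst t)) (snd t)).
  { intros i Hi. destruct (rank_code_local i y (F i) Hi (HF i Hi)) as [Gp [U [c HW]]].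
    exists (Gp, U, c). exact HW. }
  destruct (finite_choice r _ (fun _ => 0, fun _ => True, fun _ => True) Hdata) as [t Ht].
  set (Fp := fun i => fst (fst (t i))). set (U := fun i => snd (fst (t i))).
  set (c := fun i => snd (t i)).
  assert (Hlow : forall j, j < r ->
             exists b, feq (code_gamma b) (lowered F Fp j) /\ succ_lt gamma b w).
  { intros j Hj. apply lowered_realized; auto.
    - intros i Hi. split; [apply (lw_fin (Ht i Hi)) | apply (lw_lt (Ht i Hi))].
    - intros i Hi. apply (rank_code_fin i y); auto. }
  destruct (finite_choice r _ None Hlow) as [b Hb].
  destruct (finite_max (succ_ord gamma) b r gammaS_WO r_pos) as [jm [Hjm Hmax]].
  assert (Hbeta : succ_lt gamma (b jm) w) by apply (Hb jm Hjm).
  apply (removed_after d (meet_family r C) (succ_ord gamma) Q gammaS_WO Q_seq (b jm)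
           (fun z => forall i, i < r -> U i z) (fun z => forall i, i < r -> c i z) y).
  - apply open_inter. intros i Hi. apply (lw_open (Ht i Hi)).
  - exists c. split; [intros i Hi; apply (lw_mem (Ht i Hi)) | intros z; tauto].
  - apply (kept_ranks w F Fp U c b (b jm)); auto.
    + intros i Hi. apply (lw_near (Ht i Hi)).
    + intros j Hj. apply (Hb j Hj).
  - intros i Hi. apply (lw_at (Ht i Hi)).
  - destruct Hv as [->|Hwv]; [exact Hbeta | apply (proj1 (proj2 gammaS_WO) _ w); auto].
Qed.

(* A point outside every P_i^(nu_i) has ranks whose codes sum to the code of some
   w <= gamma, hence is outside Q^gamma. *)
Lemma natural_sum_bound x : Deriv d (meet_family r C) gamma x ->
  exists i, i < r /\ Deriv d (C i) (nu i) x.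
Proof.
  intros Hx. apply NNPP. intros Hnot.
  assert (Hranks : forall i, i < r -> exists G, RankCode i x G).
  { intros i Hi.
    assert (Hn : ~ P i None x).
    { intros HP. apply Hnot. exists i. split; auto.
      apply (Deriv_top d (C i) (nu i) (P i)); [apply nu_WO | apply P_seq | ]; auto. }
    destruct (first_miss_exists (succ_ord (nu i)) (P i) x None (succ_ord_WO _ (nu_WO i Hi)) Hn)
      as [u [Hu _]].
    exists (code_nu i u), u. split; [exact Hu | intro; reflexivity]. }
  destruct (finite_choice r _ (fun _ => 0) Hranks) as [F HF].
  assert (Hsum : lexle E (sumF r F) (code_gamma None)).
  { eapply lexle_ext; [intro; reflexivity | intro; symmetry; apply cnf_code_sum |].
    apply sumF_le; auto. intros i Hi. destruct (HF i Hi) as [u [_ Hu]].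
    eapply lexle_ext; [intro; symmetry; apply Hu | intro; reflexivity |].
    apply ord_code_le_top; auto. }
  destruct (code_realized None (sumF r F)) as [w [Hw Hwtop]]; auto.
  { apply finsupp_sumF. intros i Hi. apply (rank_code_fin i x); auto. }
  apply (excluded_from_all w x F HF Hw None).
  - destruct Hwtop as [->|Hlt]; auto.
  - apply (Deriv_top d (meet_family r C) gamma Q); auto. apply gamma_WO.
Qed.

End NaturalSumBound.

Theorem mainTheorem17 (X : Type) (d : X -> X -> R)
  (Hd : IsMetric d) (Hc : IsCompact d)
  (r : nat) (Hr : (0 < r)%nat) (C : nat -> (X -> Prop) -> Prop)
  (nu : nat -> RawOrd) (Hnu : forall i, (i < r)%nat -> IsWO (nu i))
  (gamma : RawOrd) (Hgamma : NatSum r nu gamma) :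
  forall x, Deriv d (meet_family r C) gamma x ->
    exists i, (i < r)%nat /\ Deriv d (C i) (nu i) x.
Proof.
  intros x Hx. destruct Hgamma as [s [xi [m [Hxi [Hdec [Hiso Hg]]]]]].
  destruct (Nat.eq_dec s 0) as [Hs0|Hs0].
  - (* no exponents: every nu i is 0, and P^0 = X *)
    exists 0. split; auto. apply Deriv_empty. intros a.
    destruct (Hiso 0 Hr) as [f _]. destruct (f a) as [[j b] Hj]. simpl in Hj. lia.
  - destruct (exponent_frame_exists xi s ltac:(lia) Hxi Hdec) as [E [emb [top Hframe]]].
    eapply natural_sum_bound; eauto.
Qed.
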